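(* Let $A$ be a coherent commutative ring. Then $A$ is an fqp-ring if and only if $A_P$ is an fqp-ring for each maximal ideal $P$ of $A$.
   Context: A ring is coherent if all its finitely generated ideals are finitely presented. A module $V$ is quasi-projective if the natural map $\mathrm{Hom}(V,V)\to\mathrm{Hom}(V,V/X)$ is surjective for every submodule $X$ of $V$; a ring is an fqp-ring if every finitely generated ideal is quasi-projective. *)

From HB Require Import structures.
From mathcomp Require Import all_boot all_order all_algebra.
Set Implicit Arguments. Unset Strict Implicit. Unset Printing Implicit Defensive.
Import GRing.Theory.
Local Open Scope ring_scope.

Definition is_ideal (R : comNzRingType) (I : R -> Prop) : Prop :=
  [/\ I 0, (forall x y, I x -> I y -> I (x + y)) & (forall a x, I x -> I (a * x))].

Definition maximal_ideal (R : comNzRingType) (P : R -> Prop) : Prop :=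
  [/\ is_ideal P, ~ P 1 &
      forall J : R -> Prop, is_ideal J -> (forall x, P x -> J x) ->
        (forall x, J x -> P x) \/ J 1].

Definition ideal_span (R : comNzRingType) (n : nat) (s : 'I_n -> R) (x : R) : Prop :=
  exists c : 'I_n -> R, x = \sum_(i < n) c i * s i.

Definition fg_ideal (R : comNzRingType) (I : R -> Prop) : Prop :=
  exists n (s : 'I_n -> R), forall x, I x <-> ideal_span s x.

(* I is finitely presented: there are generators s_0..s_{n-1} of I such that
   the kernel of R^n -> I, (v_i) |-> sum v_i s_i, is a finitely generated
   submodule of R^n, i.e. an exact sequence R^m -> R^n -> I -> 0 exists. *)
Definition fp_ideal (R : comNzRingType) (I : R -> Prop) : Prop :=
  exists n (s : 'I_n -> R),
    (forall x, I x <-> ideal_span s x) /\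
    exists m (k : 'I_m -> 'I_n -> R),
      forall v : 'I_n -> R,
        (\sum_(i < n) v i * s i = 0) <->
        exists c : 'I_m -> R, forall i, v i = \sum_(j < m) c j * k j i.

Definition coherent (R : comNzRingType) : Prop :=
  forall I : R -> Prop, is_ideal I -> fg_ideal I -> fp_ideal I.

(* The ideal V, viewed as an R-module, is quasi-projective: for every
   submodule X of V, every R-linear map h : V -> V/X is of the form pi o f
   with f : V -> V R-linear (pi : V -> V/X the projection).
   A linear map h : V -> V/X is represented by a set-theoretic lift
   g : V -> V (g v is a representative of h v); R-linearity of h is exactly
   linearity of g modulo X, and pi o f = h means f v - g v \in X. *)
Definition quasi_projective_ideal (R : comNzRingType) (V : R -> Prop) : Prop :=
  forall X : R -> Prop, is_ideal X -> (forall x, X x -> V x) ->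
  forall g : R -> R,
    (forall v, V v -> V (g v)) ->
    (forall a u v, V u -> V v -> X (g (a * u + v) - (a * g u + g v))) ->
    exists f : R -> R,
      [/\ (forall v, V v -> V (f v)),
          (forall a u v, V u -> V v -> f (a * u + v) = a * f u + f v) &
          (forall v, V v -> X (f v - g v))].

Definition fqp_ring (R : comNzRingType) : Prop :=
  forall I : R -> Prop, is_ideal I -> fg_ideal I -> quasi_projective_ideal I.

(* phi : R -> B is a localization of R at the prime P, i.e. B = R_P
   (characterized up to unique isomorphism by these three properties):
   images of elements outside P are units, every element of B is a fraction
   phi a / phi s with s outside P, and the kernel of phi consists of the
   elements annihilated by some s outside P. *)
Definition is_localization_at (R : comNzRingType) (P : R -> Prop)
    (B : comNzRingType) (phi : {rmorphism R -> B}) : Prop :=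
  [/\ (forall s, ~ P s -> exists t, phi s * t = 1),
      (forall b, exists a s, ~ P s /\ b * phi s = phi a) &
      (forall a, phi a = 0 -> exists s, ~ P s /\ s * a = 0)].

From HB Require Import structures.
From mathcomp Require Import all_boot all_order all_algebra.
From mathcomp Require Import boolp classical_sets ring.
Set Implicit Arguments. Unset Strict Implicit. Unset Printing Implicit Defensive.
Import GRing.Theory.
Local Open Scope ring_scope.
Local Open Scope quotient_scope.

(* If an ideal V is generated by s_1, ..., s_n and the relations among the
   s_i are generated by the rows of a matrix K, a linear map V -> V/X is the
   same as a vector y in V^n with K y = 0 mod X, and it lifts to an
   endomorphism of V iff y = w mod X for some w in V^n with K w = 0.  By
   coherence every finitely generated ideal has such a finite presentation,
   so quasi-projectivity becomes a finite system of equations.  It therefore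
   passes to localizations, by extending ideals and clearing denominators.
   Conversely, the a in A for which a y lifts form an ideal; a lift over A_P,
   once denominators are cleared, provides such an a outside P, so this ideal
   lies in no maximal ideal and contains 1. *)

(** * Ideals and finite presentations *)

Section Ideals.
Variable R : comNzRingType.
Implicit Types (I V X : R -> Prop).

Lemma is_ideal0 I : is_ideal I -> I 0.
Proof. by case. Qed.

Lemma is_idealD I x y : is_ideal I -> I x -> I y -> I (x + y).
Proof. by case=> _ + _; apply. Qed.

Lemma is_idealMl I a x : is_ideal I -> I x -> I (a * x).
Proof. by case=> _ _; apply. Qed.

Lemma is_idealMr I a x : is_ideal I -> I x -> I (x * a).
Proof. by rewrite mulrC; apply: is_idealMl. Qed.

Lemma is_idealN I x : is_ideal I -> I x -> I (- x).
Proof. by move=> hI hx; rewrite -mulN1r; apply: is_idealMl. Qed.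

Lemma is_idealB I x y : is_ideal I -> I x -> I y -> I (x - y).
Proof. by move=> hI hx hy; apply: is_idealD => //; apply: is_idealN. Qed.

Lemma is_ideal_sum I (T : Type) (r : seq T) (Q : pred T) (F : T -> R) :
  is_ideal I -> (forall i, Q i -> I (F i)) -> I (\sum_(i <- r | Q i) F i).
Proof.
by move=> hI; apply: (big_ind I); [exact: is_ideal0 hI | move=> x y; apply: is_idealD].
Qed.

Lemma zero_ideal : is_ideal (fun x : R => x = 0).
Proof. by split=> [|x y -> ->|a x ->]; rewrite ?addr0 ?mulr0. Qed.

Lemma full_ideal : is_ideal (fun _ : R => True).
Proof. by []. Qed.

Lemma is_ideal_meet I J : is_ideal I -> is_ideal J -> is_ideal (fun x => I x /\ J x).
Proof.
move=> hI hJ; split; first by split; apply: is_ideal0.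
  by move=> x y [? ?] [? ?]; split; apply: is_idealD.
by move=> a x [? ?]; split; apply: is_idealMl.
Qed.

Lemma ideal_span_ideal n (s : 'I_n -> R) : is_ideal (ideal_span s).
Proof.
split.
- by exists (fun _ => 0); rewrite big1 // => i _; rewrite mul0r.
- move=> _ _ [c ->] [d ->]; exists (fun i => c i + d i).
  by rewrite -big_split; apply: eq_bigr => i _; rewrite mulrDl.
- move=> a _ [c ->]; exists (fun i => a * c i).
  by rewrite mulr_sumr; apply: eq_bigr => i _; rewrite mulrA.
Qed.

Lemma sum_delta n (y : 'I_n -> R) i :
  \sum_(l < n) (l == i)%:R * y l = y i.
Proof.
rewrite (bigD1 i) //= eqxx mul1r big1 ?addr0 // => l /negbTE ->.
by rewrite mul0r.
Qed.

Lemma ideal_span_gen n (s : 'I_n -> R) i : ideal_span s (s i).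
Proof. by exists (fun l => (l == i)%:R); rewrite sum_delta. Qed.

Lemma ideal_span_min I n (s : 'I_n -> R) x :
  is_ideal I -> (forall i, I (s i)) -> ideal_span s x -> I x.
Proof. by move=> hI hs [c ->]; apply: is_ideal_sum => // i _; apply: is_idealMl. Qed.

Lemma spanned_ideal V n (s : 'I_n -> R) :
  (forall x, V x <-> ideal_span s x) -> is_ideal V.
Proof.
move=> hVs; have [h0 hD hM] := ideal_span_ideal s.
split=> [|x y|a x]; rewrite ?hVs //; first exact: hD.
exact: hM.
Qed.

End Ideals.

Arguments zero_ideal {R}.
Arguments full_ideal {R}.

Section Presentation.
Variables (R : comNzRingType) (n m : nat) (s : 'I_n -> R) (K : 'I_m -> 'I_n -> R).

Definition syzygy_basis := forall v : 'I_n -> R,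
  \sum_(i < n) v i * s i = 0 <->
  exists c : 'I_m -> R, forall i, v i = \sum_(j < m) c j * K j i.

Definition lifts_to_solution (V X : R -> Prop) (y : 'I_n -> R) :=
  exists w : 'I_n -> R, [/\ forall i, V (w i),
    forall j, \sum_(i < n) K j i * w i = 0 & forall i, X (w i - y i)].

Definition lifts_relations (V : R -> Prop) :=
  forall X, is_ideal X -> (forall x, X x -> V x) ->
  forall y : 'I_n -> R, (forall i, V (y i)) ->
  (forall j, X (\sum_(i < n) K j i * y i)) -> lifts_to_solution V X y.

Lemma lifts_to_solution_ideal V X y : is_ideal V -> is_ideal X ->
  is_ideal (fun a => lifts_to_solution V X (fun i => a * y i)).
Proof.
move=> hV hX; split.
- exists (fun=> 0); split=> [i|j|i]; rewrite ?mul0r ?subr0; try exact: is_ideal0.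
  by rewrite big1 // => i _; rewrite mulr0.
- move=> a b [w [hwV hKw hw]] [w' [hw'V hKw' hw']].
  exists (fun i => w i + w' i); split=> [i|j|i].
  + exact: is_idealD.
  + by rewrite (eq_bigr _ (fun i _ => mulrDr _ _ _)) big_split /= hKw hKw' addr0.
  + by rewrite mulrDl opprD addrACA; exact: is_idealD.
- move=> c a [w [hwV hKw hw]]; exists (fun i => c * w i); split=> [i|j|i].
  + exact: is_idealMl.
  + by rewrite (eq_bigr _ (fun i _ => mulrCA _ _ _)) -mulr_sumr hKw mulr0.
  + by rewrite -mulrA -mulrBr; exact: is_idealMl.
Qed.

(* The coefficients are an arbitrary choice (and 0 outside the span), so
   [coef_map z] is only determined up to the images under z of the
   syzygies; the lemmas below control it modulo an ideal containing K z. *)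
Definition coefs (x : R) : 'I_n -> R :=
  if pselect (ideal_span s x) is left h then projT1 (cid h) else fun=> 0.

Lemma coefsE x : ideal_span s x -> x = \sum_(i < n) coefs x i * s i.
Proof. by rewrite /coefs; case: pselect => // h _; case: (cid h). Qed.

Definition coef_map (z : 'I_n -> R) (x : R) := \sum_(i < n) coefs x i * z i.

Hypothesis hK : syzygy_basis.

Lemma syzygy_row j : \sum_(i < n) K j i * s i = 0.
Proof. by apply/hK; exists (fun l => (l == j)%:R) => i; rewrite (sum_delta (K^~ i)). Qed.

Lemma syzygy_mod X z d : is_ideal X -> (forall j, X (\sum_(i < n) K j i * z i)) ->
  \sum_(i < n) d i * s i = 0 -> X (\sum_(i < n) d i * z i).
Proof.
move=> hX hKz /hK [c hc]; under eq_bigr do rewrite hc mulr_suml.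
rewrite exchange_big /=; apply: is_ideal_sum => // j _.
by rewrite -(eq_bigr _ (fun i _ => mulrA _ _ _)) -mulr_sumr; apply: is_idealMl.
Qed.

Section CoefMap.
Variables (X : R -> Prop) (z : 'I_n -> R).
Hypotheses (hX : is_ideal X) (hKz : forall j, X (\sum_(i < n) K j i * z i)).

Lemma coef_map_mod x c : x = \sum_(i < n) c i * s i ->
  X (coef_map z x - \sum_(i < n) c i * z i).
Proof.
move=> ex; have hx : ideal_span s x by exists c.
rewrite -sumrB; under eq_bigr do rewrite -mulrBl; apply: syzygy_mod => //.
by under eq_bigr do rewrite mulrBl; rewrite sumrB -ex -coefsE ?subrr.
Qed.

Lemma coef_mapD a u v : ideal_span s u -> ideal_span s v ->
  X (coef_map z (a * u + v) - (a * coef_map z u + coef_map z v)).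
Proof.
move=> hu hv; have lin (t : 'I_n -> R) : a * \sum_(i < n) coefs u i * t i +
    \sum_(i < n) coefs v i * t i = \sum_(i < n) (a * coefs u i + coefs v i) * t i.
  by rewrite mulr_sumr -big_split; apply: eq_bigr => i _; rewrite mulrDl mulrA.
by rewrite lin; apply: coef_map_mod; rewrite -lin -!coefsE.
Qed.

Lemma coef_map_gen i : X (coef_map z (s i) - z i).
Proof. by rewrite -(sum_delta z i); apply: coef_map_mod; rewrite sum_delta. Qed.

End CoefMap.
End Presentation.

(** * Quasi-projectivity of finitely presented ideals *)

Section QuasiProjective.
Variables (R : comNzRingType) (V : R -> Prop) (n m : nat).
Variables (s : 'I_n -> R) (K : 'I_m -> 'I_n -> R).
Hypotheses (hVs : forall x, V x <-> ideal_span s x) (hK : syzygy_basis s K).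

Let hV : is_ideal V := spanned_ideal hVs.
Let hsV i : V (s i) := proj2 (hVs _) (ideal_span_gen s i).

Definition linear_mod (X : R -> Prop) (g : R -> R) :=
  forall a u v, V u -> V v -> X (g (a * u + v) - (a * g u + g v)).

Lemma linear_mod_sum X g (T : Type) (t : T -> R) (r : seq T) (c : T -> R) :
  is_ideal X -> (forall i, V (t i)) -> linear_mod X g ->
  X (g (\sum_(i <- r) c i * t i) - \sum_(i <- r) c i * g (t i)).
Proof.
move=> hX ht hg; elim: r => [|i r IH].
  have := hg (-1) 0 0 (is_ideal0 hV) (is_ideal0 hV).
  by rewrite !big_nil mulr0 addr0 mulN1r addNr !subr0.
have hr : V (\sum_(j <- r) c j * t j).
  by apply: is_ideal_sum => // j _; apply: is_idealMl.
rewrite !big_cons; set S := \sum_(j <- r) _.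
have -> : g (c i * t i + S) - (c i * g (t i) + \sum_(j <- r) c j * g (t j)) =
  (g (c i * t i + S) - (c i * g (t i) + g S)) + (g S - \sum_(j <- r) c j * g (t j)).
  by ring.
exact: is_idealD (hg _ _ _ (ht i) hr) IH.
Qed.

Lemma linear_mod0 f : linear_mod (fun x => x = 0) f ->
  forall a u v, V u -> V v -> f (a * u + v) = a * f u + f v.
Proof. by move=> hf a u v hu hv; apply/eqP; rewrite -subr_eq0; apply/eqP/hf. Qed.

Lemma linear_mod_span0 X g : is_ideal X -> linear_mod X g -> X (g 0).
Proof.
move=> hX hg; have := linear_mod_sum [::] (fun _ => 0) hX hsV hg.
by rewrite !big_nil subr0.
Qed.

Lemma linear_mod_syzygy X g j : is_ideal X -> linear_mod X g ->
  X (\sum_(i < n) K j i * g (s i)).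
Proof.
move=> hX hg; have := linear_mod_sum (index_enum _) (K j) hX hsV hg.
rewrite (syzygy_row hK) => h.
have -> : \sum_(i < n) K j i * g (s i) = g 0 - (g 0 - \sum_(i < n) K j i * g (s i)).
  by rewrite opprB addrC subrK.
exact: is_idealB (linear_mod_span0 hX hg) h.
Qed.

Lemma quasi_projective_lifts : quasi_projective_ideal V <-> lifts_relations K V.
Proof.
split=> [hqp X hX hXV y hy hKy | hlift X hX hXV g hgV hg].
  have hgV v : V v -> V (coef_map s y v).
    by move=> _; apply: is_ideal_sum => // i _; apply: is_idealMl.
  have hg : linear_mod X (coef_map s y).
    by move=> a u v /hVs hu /hVs hv; apply: coef_mapD.
  have [f [hfV hf hfg]] := hqp X hX hXV _ hgV hg.
  have hf0 : linear_mod (fun x => x = 0) f by move=> a u v hu hv; rewrite hf ?subrr.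
  exists (fun i => f (s i)); split=> [i | j | i]; first exact: hfV.
    exact: linear_mod_syzygy j zero_ideal hf0.
  rewrite -[_ - _](subrKA (coef_map s y (s i))).
  exact: is_idealD (hfg _ (hsV i)) (coef_map_gen hK hX hKy i).
have [w [hwV hKw hwy]] := hlift X hX hXV (fun i => g (s i))
  (fun i => hgV _ (hsV i)) (fun j => linear_mod_syzygy j hX hg).
exists (coef_map s w); split.
- by move=> v _; apply: is_ideal_sum => // i _; apply: is_idealMl.
- apply: (@linear_mod0 (coef_map s w)) => a u v /hVs hu /hVs hv.
  exact: (coef_mapD hK zero_ideal hKw).
- move=> v /hVs hv; rewrite -[_ - _](subrKA (\sum_(i < n) coefs s v i * g (s i))).
  apply: (is_idealD hX); last first.
    rewrite -opprB; apply: is_idealN => //.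
    by have := linear_mod_sum (index_enum _) (coefs s v) hX hsV hg; rewrite -coefsE.
  rewrite /coef_map -sumrB; apply: is_ideal_sum => // i _.
  by rewrite -mulrBr; apply: is_idealMl.
Qed.
End QuasiProjective.

Section RMorphIdeals.
Variables (A B : comNzRingType) (phi : {rmorphism A -> B}).

Lemma ideal_span_rmorph n (s : 'I_n -> A) x :
  ideal_span s x -> ideal_span (fun i => phi (s i)) (phi x).
Proof.
move=> [c ->]; exists (fun i => phi (c i)); rewrite rmorph_sum.
by apply: eq_bigr => i _; rewrite rmorphM.
Qed.

Lemma ideal_span_rmorph_eq n n' (s : 'I_n -> A) (s' : 'I_n' -> A) :
  (forall x, ideal_span s x <-> ideal_span s' x) ->
  forall b, ideal_span (fun i => phi (s i)) b <-> ideal_span (fun i => phi (s' i)) b.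
Proof.
move=> hss' b; split; apply: ideal_span_min; try exact: ideal_span_ideal;
  by move=> i; apply: ideal_span_rmorph; apply/hss'; exact: ideal_span_gen.
Qed.

Lemma preimage_ideal (X : B -> Prop) : is_ideal X -> is_ideal (fun x => X (phi x)).
Proof.
move=> hX; split=> [|x y|a x]; rewrite ?rmorph0 ?rmorphD ?rmorphM; first exact: is_ideal0.
  exact: is_idealD.
exact: is_idealMl.
Qed.

End RMorphIdeals.

(** * Prime and maximal ideals *)

Record prime_ideal (A : comNzRingType) := PrimeIdeal {
  prime_pred :> A -> Prop;
  prime_is_ideal : is_ideal prime_pred;
  prime_pred1 : ~ prime_pred 1;
  prime_predM : forall s t, ~ prime_pred s -> ~ prime_pred t -> ~ prime_pred (s * t) }.
Arguments prime_pred1 {A} p.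

Lemma common_denominator (A : comNzRingType) (P : prime_ideal A) n
    (Q : 'I_n -> A -> Prop) :
  (forall i, exists t, ~ P t /\ Q i t) -> (forall i r t, Q i t -> Q i (r * t)) ->
  exists T, ~ P T /\ forall i, Q i T.
Proof.
move=> /choice [t ht] hQ; exists (\prod_(i < n) t i); split.
  apply: (big_ind (fun x => ~ P x)); first exact: prime_pred1.
    exact: prime_predM.
  by move=> i _; case: (ht i).
by move=> i; rewrite (bigD1 i) //= mulrC; apply: hQ; case: (ht i).
Qed.

Section MaximalIdeals.
Variable A : comNzRingType.

Lemma maximal_idealM (P : A -> Prop) : maximal_ideal P ->
  forall s t, ~ P s -> ~ P t -> ~ P (s * t).
Proof.
move=> [hP hP1 hmax] s t hs ht hst.
pose J x := exists p c, P p /\ x = p + c * s.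
have hJ : is_ideal J.
  split=> [|_ _ [p [c [hp ->]]] [p' [c' [hp' ->]]] | a _ [p [c [hp ->]]]].
  - by exists 0, 0; split; [exact: is_ideal0 | rewrite mul0r addr0].
  - by exists (p + p'), (c + c'); split; [exact: is_idealD | ring].
  - by exists (a * p), (a * c); split; [exact: is_idealMl | ring].
have PJ x : P x -> J x by exists x, 0; rewrite mul0r addr0.
have [JP | [p [c [hp e]]]] := hmax J hJ PJ.
  by apply/hs/JP; exists 0, 1; split; [exact: is_ideal0 | rewrite mul1r add0r].
apply: ht; have -> : t = p * t + c * (s * t) by rewrite mulrA -mulrDl -e mul1r.
by apply: is_idealD => //; [exact: is_idealMr | exact: is_idealMl].
Qed.

(* The proof is taken apart inside the fields only, so that the carrier of
   [maximal_prime_ideal hP] is convertible to P. *)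
Definition maximal_prime_ideal P (hP : maximal_ideal P) : prime_ideal A :=
  @PrimeIdeal A P (let: And3 hI _ _ := hP in hI) (let: And3 _ hP1 _ := hP in hP1)
    (maximal_idealM hP).

Lemma chain_union_ideal (T : Type) (C : set T) (F : T -> A -> Prop) t0 :
  C t0 -> (forall t, C t -> is_ideal (F t)) ->
  total_on C (fun t t' => forall x, F t x -> F t' x) ->
  is_ideal (fun x => exists2 t, C t & F t x).
Proof.
move=> Ct0 hF hC; split=> [|x y [t Ct hx] [t' Ct' hy] | a x [t Ct hx]].
- by exists t0 => //; exact: is_ideal0 (hF _ Ct0).
- have [le | le] := hC _ _ Ct Ct'.
    by exists t' => //; apply: (is_idealD (hF _ Ct')) => //; apply: le.
  by exists t => //; apply: (is_idealD (hF _ Ct)) => //; apply: le.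
- by exists t => //; apply: (is_idealMl _ (hF _ Ct)).
Qed.

Lemma exists_maximal_ideal (J : A -> Prop) : is_ideal J -> ~ J 1 ->
  exists2 P, maximal_ideal P & forall x, J x -> P x.
Proof.
move=> hJ hJ1.
pose T := {I : A -> Prop | [/\ is_ideal I, ~ I 1 & forall x, J x -> I x]}.
pose le (I I' : T) := `[< forall x, sval I x -> sval I' x >].
pose tJ : T := exist _ J (And3 hJ hJ1 (fun x h => h)).
have [||C Ctot|[P [hP hP1 hJP]] Pmax] := @ZL_preorder T tJ le.
- by move=> I; apply/asboolP.
- by move=> I1 I2 I3 /asboolP h12 /asboolP h23; apply/asboolP => x /h12 /h23.
- have [[t0 Ct0] | C0] := pselect (exists t, C t); last first.
    by exists tJ => t Ct; case: C0; exists t.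
  pose U x := exists2 t, C t & sval t x.
  have hU : [/\ is_ideal U, ~ U 1 & forall x, J x -> U x].
    split=> [||x Jx].
    + apply: (chain_union_ideal Ct0) => [t _ | t t' Ct Ct']; first by case: (proj2_sig t).
      by case: (Ctot t t' Ct Ct') => /asboolP; [left | right].
    + by move=> [t _]; case: (proj2_sig t) => _ + _; apply.
    + by exists t0 => //; case: (proj2_sig t0) => _ _; apply.
  by exists (exist _ U hU) => t Ct; apply/asboolP => x; exists t.
- exists P => //; split=> // I hI hPI; have [|hI1] := pselect (I 1); [by right | left].
  have hIT : [/\ is_ideal I, ~ I 1 & forall x, J x -> I x] by split=> // x /hJP /hPI.
  have /asboolP IP : le (exist _ I hIT) (exist _ P (And3 hP hP1 hJP)).
    by apply: Pmax; apply/asboolP.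
  exact: IP.
Qed.

End MaximalIdeals.

(** * Localization at a prime ideal *)

Module Localization.
Section Localization.
Variables (A : comNzRingType) (P : prime_ideal A).

Record frac := Frac { num : A; den : A; denP : ~ P den }.
Arguments denP : clear implicits.

HB.instance Definition _ := gen_eqMixin frac.
HB.instance Definition _ := gen_choiceMixin frac.

Definition frac_eqv (x y : frac) : bool :=
  `[< exists u, ~ P u /\ u * (num x * den y - num y * den x) = 0 >].

Lemma frac_eqvP x y :
  reflect (exists u, ~ P u /\ u * (num x * den y - num y * den x) = 0) (frac_eqv x y).
Proof. exact: asboolP. Qed.

Lemma frac_eqv_cross x y c x' y' :
  num x' * den y' - num y' * den x' = c * (num x * den y - num y * den x) ->
  frac_eqv x y -> frac_eqv x' y'.
Proof.
move=> e /frac_eqvP [u [hu eu]]; apply/frac_eqvP; exists u; split=> //.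
by rewrite e mulrCA eu mulr0.
Qed.

Lemma frac_eqv_refl : reflexive frac_eqv.
Proof. by move=> x; apply/frac_eqvP; exists 1; split; [exact: prime_pred1 | ring]. Qed.

Lemma frac_eqv_sym : symmetric frac_eqv.
Proof.
by move=> x y; apply/idP/idP; apply: (frac_eqv_cross (c := -1)); ring.
Qed.

Lemma frac_eqv_trans : transitive frac_eqv.
Proof.
move=> y x z /frac_eqvP [u [hu e1]] /frac_eqvP [v [hv e2]].
apply/frac_eqvP; exists (u * v * den y); split.
  by apply: prime_predM; [exact: prime_predM | exact: denP].
have -> : u * v * den y * (num x * den z - num z * den x) =
  v * den z * (u * (num x * den y - num y * den x)) +
  u * den x * (v * (num y * den z - num z * den y)) by ring.
by rewrite e1 e2 !mulr0 addr0.
Qed.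

Canonical frac_eqv_equiv :=
  EquivRel frac_eqv frac_eqv_refl frac_eqv_sym frac_eqv_trans.

Definition type := {eq_quot frac_eqv}.
HB.instance Definition _ : EqQuotient _ frac_eqv type :=
  EqQuotient.on type.
HB.instance Definition _ := Choice.on type.

Lemma frac_eqv_repr x : frac_eqv (repr (\pi_type x)) x.
Proof. by apply/eqmodP; rewrite reprK. Qed.

Lemma frac_eqv_eq x y : num x * den y = num y * den x -> frac_eqv x y.
Proof.
by move=> e; apply/frac_eqvP; exists 1; split; [exact: prime_pred1 | rewrite e subrr mulr0].
Qed.

Definition addf x y :=
  @Frac (num x * den y + num y * den x) _ (prime_predM (denP x) (denP y)).
Definition mulf x y := @Frac (num x * num y) _ (prime_predM (denP x) (denP y)).
Definition oppf x := @Frac (- num x) _ (denP x).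
Definition fracC a := @Frac a _ (prime_pred1 P).

Definition add := lift_op2 type addf.
Definition mul := lift_op2 type mulf.
Definition opp := lift_op1 type oppf.
Definition embed := lift_embed type fracC.
Canonical embed_pi_morph := PiEmbed embed.

Lemma pi_add : {morph \pi : x y / addf x y >-> add x y}.
Proof.
move=> x y; unlock add; apply/eqmodP; set x' := repr _; set y' := repr _.
apply: (@frac_eqv_trans (addf x' y)).
  apply: (frac_eqv_cross (c := - (den y * den y))) (frac_eqv_repr x); rewrite /=; ring.
apply: (frac_eqv_cross (c := - (den x' * den x'))) (frac_eqv_repr y); rewrite /=; ring.
Qed.
Canonical pi_add_morph := PiMorph2 pi_add.

Lemma pi_mul : {morph \pi : x y / mulf x y >-> mul x y}.
Proof.
move=> x y; unlock mul; apply/eqmodP; set x' := repr _; set y' := repr _.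
apply: (@frac_eqv_trans (mulf x' y)).
  apply: (frac_eqv_cross (c := - (num y * den y))) (frac_eqv_repr x); rewrite /=; ring.
apply: (frac_eqv_cross (c := - (num x' * den x'))) (frac_eqv_repr y); rewrite /=; ring.
Qed.
Canonical pi_mul_morph := PiMorph2 pi_mul.

Lemma pi_opp : {morph \pi : x / oppf x >-> opp x}.
Proof.
move=> x; unlock opp; apply/eqmodP.
apply: (frac_eqv_cross (c := 1)) (frac_eqv_repr x); rewrite /=; ring.
Qed.
Canonical pi_opp_morph := PiMorph1 pi_opp.

Lemma addA : associative add.
Proof.
elim/quotW=> x; elim/quotW=> y; elim/quotW=> z; rewrite !piE.
by apply/eqmodP/frac_eqv_eq => /=; ring.
Qed.

Lemma addC : commutative add.
Proof.
elim/quotW=> x; elim/quotW=> y; rewrite !piE.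
by apply/eqmodP/frac_eqv_eq => /=; ring.
Qed.

Lemma add0 : left_id (embed 0) add.
Proof. by elim/quotW=> x; rewrite !piE; apply/eqmodP/frac_eqv_eq => /=; ring. Qed.

Lemma addN : left_inverse (embed 0) opp add.
Proof. by elim/quotW=> x; rewrite !piE; apply/eqmodP/frac_eqv_eq => /=; ring. Qed.

HB.instance Definition _ := GRing.isZmodule.Build type addA addC add0 addN.

Lemma mulA : associative mul.
Proof.
elim/quotW=> x; elim/quotW=> y; elim/quotW=> z; rewrite !piE.
by apply/eqmodP/frac_eqv_eq => /=; ring.
Qed.

Lemma mulC : commutative mul.
Proof.
elim/quotW=> x; elim/quotW=> y; rewrite !piE.
by apply/eqmodP/frac_eqv_eq => /=; ring.
Qed.

Lemma mul1 : left_id (embed 1) mul.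
Proof. by elim/quotW=> x; rewrite !piE; apply/eqmodP/frac_eqv_eq => /=; ring. Qed.

Lemma mulDl : left_distributive mul add.
Proof.
elim/quotW=> x; elim/quotW=> y; elim/quotW=> z; rewrite !piE.
by apply/eqmodP/frac_eqv_eq => /=; ring.
Qed.

Lemma embed1_neq0 : embed 1 != embed 0.
Proof.
rewrite !piE; apply/negP => /frac_eqvP [u [hu]] /= e; apply: hu.
have -> : u = 0 by rewrite -e; ring.
by case: (prime_is_ideal P).
Qed.

HB.instance Definition _ :=
  GRing.Zmodule_isComNzRing.Build type mulA mulC mul1 mulDl embed1_neq0.

Lemma embed_is_zmod_morphism : zmod_morphism embed.
Proof.
move=> a b; unlock embed; rewrite -[X in _ = _ + X]pi_opp -[RHS]pi_add.
by apply/eqmodP/frac_eqv_eq => /=; ring.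
Qed.

Lemma embed_is_monoid_morphism : monoid_morphism embed.
Proof.
split=> // a b; unlock embed; rewrite -[RHS]pi_mul.
by apply/eqmodP/frac_eqv_eq => /=; ring.
Qed.

HB.instance Definition _ := GRing.isZmodMorphism.Build A type embed
  embed_is_zmod_morphism.
HB.instance Definition _ := GRing.isMonoidMorphism.Build A type embed
  embed_is_monoid_morphism.

Lemma embedP : is_localization_at P (embed : {rmorphism A -> type}).
Proof.
split.
- move=> s hs; exists (\pi_type (@Frac 1 s hs)).
  have -> : 1 = embed 1 :> type by [].
  by rewrite !piE; apply/eqmodP/frac_eqv_eq => /=; ring.
- elim/quotW=> x; exists (num x), (den x); split; first exact: denP.
  rewrite /= !piE; apply/eqmodP/frac_eqv_eq => /=; ring.
- move=> a; rewrite /= -[0]/(embed 0) !piE => /eqmodP/frac_eqvP [u [hu]] /=.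
  by move=> e; exists u; split=> //; rewrite -e; ring.
Qed.

End Localization.
End Localization.
HB.export Localization.

Notation loc_embed := Localization.embed.

(** * Localizing lifting problems *)

Section LocalizationTheory.
Variables (A B : comNzRingType) (P : prime_ideal A) (phi : {rmorphism A -> B}).
Hypothesis hloc : is_localization_at P phi.

Lemma loc_unit s : ~ P s -> exists t, phi s * t = 1.
Proof. by case: hloc => + _ _; apply. Qed.

Lemma loc_fraction b : exists a s, ~ P s /\ b * phi s = phi a.
Proof. by case: hloc => _ + _; apply. Qed.

Lemma loc_kernel a : phi a = 0 -> exists s, ~ P s /\ s * a = 0.
Proof. by case: hloc => _ _; apply. Qed.

Definition loc_ideal (I : A -> Prop) (b : B) :=
  exists x t, [/\ I x, ~ P t & b * phi t = phi x].

Lemma loc_ideal_ideal I : is_ideal I -> is_ideal (loc_ideal I).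
Proof.
move=> hI; split.
- by exists 0, 1; split; [exact: is_ideal0 | exact: prime_pred1 | rewrite !rmorph0 mul0r].
- move=> b1 b2 [x1 [t1 [h1 ht1 e1]]] [x2 [t2 [h2 ht2 e2]]].
  exists (x1 * t2 + x2 * t1), (t1 * t2); split.
  + by apply: (is_idealD hI); apply: is_idealMr.
  + exact: prime_predM.
  + by rewrite rmorphD !rmorphM -e1 -e2; ring.
- move=> c b [x [t [h ht e]]]; have [a [r [hr er]]] := loc_fraction c.
  exists (a * x), (r * t); split; [exact: is_idealMl | exact: prime_predM |].
  by rewrite !rmorphM -e -er; ring.
Qed.

Lemma loc_ideal_rmorph (I : A -> Prop) x : I x -> loc_ideal I (phi x).
Proof. by exists x, 1; split; [|exact: prime_pred1|rewrite rmorph1 mulr1]. Qed.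

Lemma loc_idealP V n (s : 'I_n -> A) :
  (forall x, V x <-> ideal_span s x) ->
  forall b, loc_ideal V b <-> ideal_span (fun i => phi (s i)) b.
Proof.
move=> hVs b; split.
  move=> [x [t [/hVs hx /loc_unit [u hu] e]]].
  have -> : b = u * phi x by rewrite -e mulrCA [u * _]mulrC hu mulr1.
  by apply: is_idealMl; [exact: ideal_span_ideal | exact: ideal_span_rmorph].
apply: ideal_span_min; first exact/loc_ideal_ideal/(spanned_ideal hVs).
by move=> i; apply/loc_ideal_rmorph/hVs/ideal_span_gen.
Qed.

Lemma loc_common_denominator (V : A -> Prop) n (b : 'I_n -> B) :
  is_ideal V -> (forall i, loc_ideal V (b i)) ->
  exists T (z : 'I_n -> A), ~ P T /\ forall i, V (z i) /\ b i * phi T = phi (z i).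
Proof.
move=> hV hb.
have [T [hT hQ]] : exists T, ~ P T /\ forall i, exists2 z, V z & b i * phi T = phi z.
  apply: common_denominator => [i | i r t [z hz e]].
    by have [x [t [hx ht e]]] := hb i; exists t; split=> //; exists x.
  exists (r * z); first exact: is_idealMl.
  by rewrite !rmorphM -e; ring.
have /choice [z hz] : forall i, exists z, V z /\ b i * phi T = phi z.
  by move=> i; have [z ? ?] := hQ i; exists z.
by exists T, z.
Qed.

Lemma loc_ideal_full b : loc_ideal (fun _ => True) b.
Proof. by have [a [t [ht e]]] := loc_fraction b; exists a, t. Qed.

Lemma loc_ideal_preimage (X : A -> Prop) a :
  is_ideal X -> loc_ideal X (phi a) -> exists2 u, ~ P u & X (u * a).
Proof.
move=> hX [x [t [hx ht e]]].
have [q [hq eq]] : exists q, ~ P q /\ q * (a * t - x) = 0.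
  by apply: loc_kernel; rewrite rmorphB rmorphM e subrr.
exists (q * t); first exact: prime_predM.
have -> : q * t * a = q * (a * t - x) + q * x by ring.
by rewrite eq add0r; exact: is_idealMl.
Qed.

Lemma loc_syzygy_basis n m (s : 'I_n -> A) (K : 'I_m -> 'I_n -> A) :
  syzygy_basis s K -> syzygy_basis (fun i => phi (s i)) (fun j i => phi (K j i)).
Proof.
move=> hK v; split; last first.
  move=> [c hc]; under eq_bigr do rewrite hc mulr_suml.
  rewrite exchange_big big1 // => j _.
  transitivity (c j * phi (\sum_(i < n) K j i * s i)).
    by rewrite rmorph_sum mulr_sumr; apply: eq_bigr => i _; rewrite rmorphM mulrA.
  by rewrite (syzygy_row hK) rmorph0 mulr0.
move=> hv0; have [T [z [hT hz]]] :=
  loc_common_denominator full_ideal (fun i => loc_ideal_full (v i)).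
have [u [hu hu0]] : exists u, ~ P u /\ u * \sum_(i < n) z i * s i = 0.
  apply: loc_kernel; transitivity (phi T * \sum_(i < n) v i * phi (s i)).
    rewrite rmorph_sum mulr_sumr; apply: eq_bigr => i _.
    by rewrite rmorphM -(hz i).2; ring.
  by rewrite hv0 mulr0.
have [c hc] : exists c : 'I_m -> A, forall i, u * z i = \sum_(j < m) c j * K j i.
  apply/hK; rewrite -[RHS]hu0 mulr_sumr.
  by apply: eq_bigr => i _; rewrite mulrA.
have [w hw] := loc_unit (prime_predM hu hT).
exists (fun j => w * phi (c j)) => i.
transitivity (w * phi (u * z i)).
  transitivity (v i * (phi (u * T) * w)); first by rewrite hw mulr1.
  by rewrite !rmorphM -(hz i).2; ring.
by rewrite hc rmorph_sum mulr_sumr; apply: eq_bigr => j _; rewrite rmorphM mulrA.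
Qed.

Lemma loc_fg_span (W : B -> Prop) : fg_ideal W ->
  exists n (a : 'I_n -> A), forall b, W b <-> ideal_span (fun i => phi (a i)) b.
Proof.
move=> [n [g hWg]].
have /choice [a ha] : forall i, exists a, exists2 t, ~ P t & g i * phi t = phi a.
  by move=> i; have [a [t [ht e]]] := loc_fraction (g i); exists a, t.
exists n, a => b; rewrite hWg; split; apply: ideal_span_min; try exact: ideal_span_ideal.
  move=> i; have [t /loc_unit [u hu] e] := ha i.
  have -> : g i = u * phi (a i) by rewrite -e mulrCA [u * _]mulrC hu mulr1.
  by apply: is_idealMl; [exact: ideal_span_ideal | exact: ideal_span_gen].
move=> i; have [t _ <-] := ha i.
by apply: is_idealMr; [exact: ideal_span_ideal | exact: ideal_span_gen].
Qed.

Lemma loc_lifts_relations V n m (s : 'I_n -> A) (K : 'I_m -> 'I_n -> A) :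
  (forall x, V x <-> ideal_span s x) -> lifts_relations K V ->
  lifts_relations (fun j i => phi (K j i)) (ideal_span (fun i => phi (s i))).
Proof.
move=> hVs hlift X hX hXW y hy hKy; have hV := spanned_ideal hVs.
have [T [z [hT hz]]] :=
  loc_common_denominator hV (fun i => proj2 (loc_idealP hVs _) (hy i)).
have hKz j : V (\sum_(i < n) K j i * z i) /\ X (phi (\sum_(i < n) K j i * z i)).
  split; first by apply: is_ideal_sum => // i _; apply: is_idealMl; case: (hz i).
  rewrite rmorph_sum (eq_bigr (fun i => phi T * (phi (K j i) * y i))); last first.
    by move=> i _; rewrite rmorphM -(hz i).2; ring.
  by rewrite -mulr_sumr; apply: is_idealMl.
have [w [hwV hKw hwz]] := hlift _ (is_ideal_meet hV (preimage_ideal phi hX))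
  (fun x => @proj1 _ _) z (fun i => (hz i).1) hKz.
have [t ht] := loc_unit hT.
exists (fun i => phi (w i) * t); split=> [i | j | i].
- by apply: is_idealMr; [exact: ideal_span_ideal | exact/ideal_span_rmorph/hVs].
- transitivity (t * phi (\sum_(i < n) K j i * w i)); last by rewrite hKw rmorph0 mulr0.
  by rewrite rmorph_sum mulr_sumr; apply: eq_bigr => i _; rewrite rmorphM; ring.
- have -> : phi (w i) * t - y i = t * phi (w i - z i).
    rewrite rmorphB -(hz i).2.
    transitivity (phi (w i) * t - y i * (phi T * t)); first by rewrite ht mulr1.
    by ring.
  by apply: is_idealMl => //; case: (hwz i).
Qed.

Lemma lifts_to_solution_of_loc V n m (s : 'I_n -> A) (K : 'I_m -> 'I_n -> A) X y :
  (forall x, V x <-> ideal_span s x) ->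
  lifts_relations (fun j i => phi (K j i)) (ideal_span (fun i => phi (s i))) ->
  is_ideal X -> (forall x, X x -> V x) -> (forall i, V (y i)) ->
  (forall j, X (\sum_(i < n) K j i * y i)) ->
  exists2 u, ~ P u & lifts_to_solution K V X (fun i => u * y i).
Proof.
move=> hVs hlift hX hXV hy hKy; have hV := spanned_ideal hVs.
have [w' [hw'W hKw' hw'y]] : lifts_to_solution (fun j i => phi (K j i))
    (ideal_span (fun i => phi (s i))) (loc_ideal X) (fun i => phi (y i)).
  apply: hlift; first exact: loc_ideal_ideal.
  - move=> b [x [t [hx ht e]]]; apply/(loc_idealP hVs); exists x, t; split=> //.
    exact: hXV.
  - by move=> i; apply/(loc_idealP hVs)/loc_ideal_rmorph.
  - move=> j; rewrite (eq_bigr (fun i => phi (K j i * y i))); last first.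
      by move=> i _; rewrite rmorphM.
    by rewrite -rmorph_sum; exact: loc_ideal_rmorph.
have [T [z [hT hz]]] :=
  loc_common_denominator hV (fun i => proj2 (loc_idealP hVs _) (hw'W i)).
have [U [hU hUz]] : exists U, ~ P U /\ forall j, U * \sum_(i < n) K j i * z i = 0.
  apply: (@common_denominator _ P m (fun j u => u * \sum_(i < n) K j i * z i = 0)).
    move=> j; apply: loc_kernel.
    transitivity (phi T * \sum_(i < n) phi (K j i) * w' i); last by rewrite hKw' mulr0.
    rewrite rmorph_sum mulr_sumr; apply: eq_bigr => i _.
    by rewrite rmorphM -(hz i).2; ring.
  by move=> j r t e; rewrite -mulrA e mulr0.
have [S [hS hSz]] : exists S, ~ P S /\ forall i, X (S * (z i - T * y i)).
  apply: (@common_denominator _ P n (fun i u => X (u * (z i - T * y i)))).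
    move=> i; have : loc_ideal X (phi (z i - T * y i)).
      have -> : phi (z i - T * y i) = phi T * (w' i - phi (y i)).
        by rewrite rmorphB rmorphM -(hz i).2; ring.
      exact: is_idealMl (loc_ideal_ideal hX) (hw'y i).
    by move=> /(loc_ideal_preimage hX) [u hu hXu]; exists u.
  by move=> i r t h; rewrite -mulrA; exact: is_idealMl.
exists (U * S * T); first by apply: prime_predM => //; exact: prime_predM.
exists (fun i => U * S * z i); split=> [i | j | i].
- by apply: is_idealMl; case: (hz i).
- transitivity (S * (U * \sum_(i < n) K j i * z i)); last by rewrite hUz mulr0.
  by rewrite !mulr_sumr; apply: eq_bigr => i _; ring.
- have -> : U * S * z i - U * S * T * y i = U * (S * (z i - T * y i)) by ring.
  exact: is_idealMl.
Qed.

End LocalizationTheory.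

(** * Local characterization of fqp-rings *)

Lemma fqp_ring_localization (A : comNzRingType) : coherent A -> fqp_ring A ->
  forall P : A -> Prop, maximal_ideal P ->
  forall (B : comNzRingType) (phi : {rmorphism A -> B}),
    is_localization_at P phi -> fqp_ring B.
Proof.
move=> hcoh hfqp P hP B phi hloc W hW hWfg.
have hlocP : is_localization_at (maximal_prime_ideal hP) phi := hloc.
have [n [a hWa]] := loc_fg_span hlocP hWfg.
have [n' [s [hVs [m [K hK]]]]] : fp_ideal (ideal_span a).
  by apply: hcoh; [exact: ideal_span_ideal | exists n, a].
have -> : W = ideal_span (fun i => phi (s i)).
  by apply/funext => b; apply/propext; rewrite hWa; exact: ideal_span_rmorph_eq.
apply/(quasi_projective_lifts (fun b => iff_refl _) (loc_syzygy_basis hlocP hK)).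
apply: (loc_lifts_relations hlocP hVs).
by apply/(quasi_projective_lifts hVs hK)/hfqp; [exact: ideal_span_ideal | exists n, a].
Qed.

Lemma fqp_ring_of_localizations (A : comNzRingType) : coherent A ->
  (forall P : A -> Prop, maximal_ideal P ->
   forall (B : comNzRingType) (phi : {rmorphism A -> B}),
     is_localization_at P phi -> fqp_ring B) ->
  fqp_ring A.
Proof.
move=> hcoh hloc V hV hVfg.
have [n [s [hVs [m [K hK]]]]] := hcoh V hV hVfg.
apply/(quasi_projective_lifts hVs hK) => X hX hXV y hy hKy.
pose J a := lifts_to_solution K V X (fun i => a * y i).
suff : J 1 by congr lifts_to_solution; apply: funext => i; rewrite mul1r.
apply: contrapT => hJ1.
have [P hP hJP] := exists_maximal_ideal (lifts_to_solution_ideal K y hV hX) hJ1.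
pose Pp := maximal_prime_ideal hP.
pose W := ideal_span (fun i => loc_embed Pp (s i)).
have hWlift : lifts_relations (fun j i => loc_embed Pp (K j i)) W.
  apply/(quasi_projective_lifts (fun b => iff_refl (W b))).
    exact: (loc_syzygy_basis (Localization.embedP Pp) hK).
  apply: (hloc P hP _ _ (Localization.embedP Pp)); first exact: ideal_span_ideal.
  by exists n, (fun i => loc_embed Pp (s i)).
have [u hu /hJP] :=
  lifts_to_solution_of_loc (Localization.embedP Pp) hVs hWlift hX hXV hy hKy.
exact: hu.
Qed.

Theorem proposition4p4 (A : comNzRingType) :
  coherent A ->
  (fqp_ring A <->
   forall P : A -> Prop, maximal_ideal P ->
   forall (B : comNzRingType) (phi : {rmorphism A -> B}),
     is_localization_at P phi -> fqp_ring B).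
Proof.
move=> hcoh; split; first exact: fqp_ring_localization.
exact: fqp_ring_of_localizations.
Qed.
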